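(* Let $a,b,g,m,n>0$ and $0<e<1$, and consider the planar system $$\dot x=a-ex-\frac{xy}{1+gy},\qquad \dot y=\frac{xy}{1+gy}-y-\frac{my}{b+ny}.$$ Let $a_1=(eg+1)n$, $a_2=(b+m)(eg+1)+n(e-a)$, $a_3=e(b+m)-ab$, $\Delta=a_2^2-4a_1a_3$, and $$a_4=\frac{[en-(b-m)(eg+1)]+\sqrt{4m(eg+1)[ne-b(eg+1)]}}{n}.$$ Suppose $n>\frac{(eg+1)b^2+m(eg+1)b}{me}$ and $a_4<a<\frac{e(m+b)}{b}$. Let $y_2=\frac{-a_2-\sqrt{\Delta}}{2a_1}$ and $x_2=\frac{a(1+gy_2)}{e+(eg+1)y_2}$, so that $E_2=(x_2,y_2)$ is an endemic equilibrium of the system. Then $E_2$ is a saddle point.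
   Context: The system is a rescaled SIR epidemic model with saturated infection rate and saturated treatment rate. *)

From HB Require Import structures.
From mathcomp Require Import all_boot all_order all_algebra.
From mathcomp Require Import all_classical all_reals all_analysis.
Set Implicit Arguments. Unset Strict Implicit. Unset Printing Implicit Defensive.
Import Order.TTheory GRing.Theory Num.Theory.
Local Open Scope ring_scope.

Definition sir_f (R : realType) (a b e g m n : R) (x y : R) : R :=
  a - e * x - x * y / (1 + g * y).
Definition sir_g (R : realType) (a b e g m n : R) (x y : R) : R :=
  x * y / (1 + g * y) - y - m * y / (b + n * y).

Definition jacobian2 (R : realType) (F G : R -> R -> R) (x0 y0 : R) : 'M[R]_2 :=
  \matrix_(i < 2, j < 2)
    (if i == 0 then
       (if j == 0 then derive1 (fun x => F x y0) x0 else derive1 (fun y => F x0 y) y0)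
     else
       (if j == 0 then derive1 (fun x => G x y0) x0 else derive1 (fun y => G x0 y) y0)).

Definition saddle_point (R : realType) (F G : R -> R -> R) (x0 y0 : R) : Prop :=
  F x0 y0 = 0 /\ G x0 y0 = 0 /\
  exists l1 l2 : R, l1 < 0 /\ 0 < l2 /\
    eigenvalue (jacobian2 F G x0 y0) l1 /\ eigenvalue (jacobian2 F G x0 y0) l2.

(* At an endemic equilibrium the y-nullcline is the quadratic
   a1 y^2 + a2 y + a3 = 0; using it to eliminate a, the Jacobian determinant
   becomes y (2 a1 y + a2) / ((1 + g y) (b + n y)).  At the smaller root y2 we
   have 2 a1 y2 + a2 = - sqrt Delta < 0, so the determinant is negative and the
   two real eigenvalues have opposite signs.  The parameter conditions give
   a2 < 0 < a3 and Delta > 0 (a4 is the larger root of Delta seen as a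
   polynomial in a), which makes y2 positive. *)
From mathcomp Require Import all_boot all_order all_algebra.
From mathcomp Require Import all_classical all_reals all_analysis.
From mathcomp Require Import ring lra.
Set Implicit Arguments. Unset Strict Implicit. Unset Printing Implicit Defensive.
Import Order.TTheory GRing.Theory Num.Theory.
Local Open Scope ring_scope.

Lemma det_mx22 (R : comNzRingType) (A : 'M[R]_2) :
  \det A = A 0 0 * A 1 1 - A 0 1 * A 1 0.
Proof.
rewrite (expand_det_row _ 0) !big_ord_recl big_ord0 /cofactor !det_mx11 !mxE /=.
rewrite addr0 expr0 expr1 !mul1r mulN1r mulrN.
by congr (A _ _ * A _ _ - A _ _ * A _ _); apply: val_inj.
Qed.

Lemma mxtrace22 (R : comNzRingType) (A : 'M[R]_2) : \tr A = A 0 0 + A 1 1.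
Proof.
rewrite /mxtrace !big_ord_recl big_ord0 addr0.
by congr (A _ _ + A _ _); apply: val_inj.
Qed.

Lemma eigenvalue_mx22 (F : fieldType) (A : 'M[F]_2) l :
  eigenvalue A l = (l ^+ 2 - \tr A * l + \det A == 0).
Proof.
rewrite eigenvalue_root_char /root /char_poly /char_poly_mx det_mx22 !mxE /= !hornerE.
by congr (_ == 0); rewrite mxtrace22 det_mx22; ring.
Qed.

Lemma eigenvalues_of_det_lt0 (R : rcfType) (A : 'M[R]_2) : \det A < 0 ->
  exists l1 l2 : R, l1 < 0 /\ 0 < l2 /\ eigenvalue A l1 /\ eigenvalue A l2.
Proof.
set t := \tr A; set d := \det A => d_lt0.
set s := Num.sqrt (t ^+ 2 - 4 * d).
have s2E : s ^+ 2 = t ^+ 2 - 4 * d by rewrite sqr_sqrtr //; nra.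
have s_ge0 : 0 <= s by exact: sqrtr_ge0.
have charE l : l ^+ 2 - t * l + d = ((2 * l - t) ^+ 2 - s ^+ 2) / 4.
  by rewrite s2E; field.
have t_lt_s : t < s by nra.
have Nt_lt_s : - t < s by nra.
exists ((t - s) / 2), ((t + s) / 2).
split; [lra | split; [lra | split]]; rewrite eigenvalue_mx22 charE.
- by rewrite (_ : 2 * _ - t = - s) ?sqrrN ?subrr ?mul0r //; field.
- by rewrite (_ : 2 * _ - t = s) ?subrr ?mul0r //; field.
Qed.

Lemma quadratic_root (F : numFieldType) (c2 c1 c0 s : F) :
  c2 != 0 -> s ^+ 2 = c1 ^+ 2 - 4 * c2 * c0 ->
  c2 * ((- c1 + s) / (2 * c2)) ^+ 2 + c1 * ((- c1 + s) / (2 * c2)) + c0 = 0.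
Proof.
move=> c2_neq0 s2E.
have -> : c2 * ((- c1 + s) / (2 * c2)) ^+ 2 + c1 * ((- c1 + s) / (2 * c2)) + c0 =
          (s ^+ 2 - (c1 ^+ 2 - 4 * c2 * c0)) / (4 * c2) by field.
by rewrite s2E subrr mul0r.
Qed.

Lemma quadratic_smaller_root_gt0 (R : rcfType) (c2 c1 c0 : R) :
  0 < c2 -> c1 < 0 -> 0 < c0 -> 0 <= c1 ^+ 2 - 4 * c2 * c0 ->
  0 < (- c1 - Num.sqrt (c1 ^+ 2 - 4 * c2 * c0)) / (2 * c2).
Proof.
move=> c2_gt0 c1_lt0 c0_gt0 disc_ge0.
set s := Num.sqrt _.
have s2E : s ^+ 2 = c1 ^+ 2 - 4 * c2 * c0 by rewrite sqr_sqrtr.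
have s_ge0 : 0 <= s by exact: sqrtr_ge0.
have s_lt : s < - c1 by nra.
by apply: divr_gt0; lra.
Qed.

Lemma is_derive_inv_affine (R : realType) (c d y : R) : c + d * y != 0 ->
  is_derive y 1 (fun y => (c + d * y)^-1) (- (c + d * y) ^- 2 *: d).
Proof.
move=> cdy_neq0.
have : is_derive y 1 (fun y => c + d * y) d.
  by apply: is_derive_eq; rewrite add0r mul1r; exact: mulr1.
by move=> ?; exact: is_deriveV.
Qed.

Section Jacobian.
Variables (R : realType) (a b e g m n : R).

Lemma derive1_sir_f_x x y :
  derive1 (sir_f a b e g m n ^~ y) x = - e - y / (1 + g * y).
Proof.
by rewrite derive1E; apply: derive_val; apply: is_derive_eq; rewrite /GRing.scale /=; ring.
Qed.

Lemma derive1_sir_f_y x y : 1 + g * y != 0 ->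
  derive1 (sir_f a b e g m n x) y = - x / (1 + g * y) ^+ 2.
Proof.
move=> gy_neq0; have dinv := is_derive_inv_affine gy_neq0.
by rewrite derive1E; apply: derive_val; apply: is_derive_eq; rewrite /GRing.scale /=; field.
Qed.

Lemma derive1_sir_g_x x y :
  derive1 (sir_g a b e g m n ^~ y) x = y / (1 + g * y).
Proof.
by rewrite derive1E; apply: derive_val; apply: is_derive_eq; rewrite /GRing.scale /=; ring.
Qed.

Lemma derive1_sir_g_y x y : 1 + g * y != 0 -> b + n * y != 0 ->
  derive1 (sir_g a b e g m n x) y =
  x / (1 + g * y) ^+ 2 - 1 - m * b / (b + n * y) ^+ 2.
Proof.
move=> gy_neq0 ny_neq0.
have dinv1 := is_derive_inv_affine gy_neq0.
have dinv2 := is_derive_inv_affine ny_neq0.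
rewrite derive1E; apply: derive_val; apply: is_derive_eq; rewrite /GRing.scale /=.
by field; apply/andP.
Qed.

(* Typed at [R] rather than at the ring carrier of [\det], so that [field]
   can later be used on goals rewritten with it. *)
Lemma det_jacobian_sir x y : 1 + g * y != 0 -> b + n * y != 0 ->
  \det (jacobian2 (sir_f a b e g m n) (sir_g a b e g m n) x y) =
  (- e - y / (1 + g * y)) * (x / (1 + g * y) ^+ 2 - 1 - m * b / (b + n * y) ^+ 2)
  + x * y / (1 + g * y) ^+ 3 :> R.
Proof.
move=> gy_neq0 ny_neq0.
rewrite det_mx22 !mxE /= derive1_sir_f_x derive1_sir_f_y // derive1_sir_g_x.
by rewrite derive1_sir_g_y //; field; apply/andP.
Qed.
End Jacobian.

Section Endemic.
Variables (R : realType) (a b e g m n : R).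
Hypotheses (b_gt0 : 0 < b) (e_gt0 : 0 < e) (g_gt0 : 0 < g) (n_gt0 : 0 < n).

Local Notation k := (e * g + 1).
Local Notation a1 := (k * n).
Local Notation a2 := ((b + m) * k + n * (e - a)).
Local Notation a3 := (e * (b + m) - a * b).
Local Notation x_of y := (a * (1 + g * y) / (e + k * y)).

Section Root.
Variable y : R.
Hypotheses (y_gt0 : 0 < y) (y_root : a1 * y ^+ 2 + a2 * y + a3 = 0).

Let gy_gt0 : 0 < 1 + g * y. Proof. by rewrite addr_gt0 ?mulr_gt0. Qed.
Let ny_gt0 : 0 < b + n * y. Proof. by rewrite addr_gt0 ?mulr_gt0. Qed.
Let ky_gt0 : 0 < e + k * y. Proof. by rewrite addr_gt0 ?mulr_gt0 ?addr_gt0 ?mulr_gt0. Qed.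
Let gy_neq0 := lt0r_neq0 gy_gt0.
Let ny_neq0 := lt0r_neq0 ny_gt0.
Let ky_neq0 := lt0r_neq0 ky_gt0.

(* [y_root] is the y-nullcline a (b + n y) = (e + k y) (b + n y + m), with x
   eliminated through the x-nullcline x = x_of y. *)
Let aE : a = (e + k * y) * (b + n * y + m) / (b + n * y).
Proof.
have nullcline : a * (b + n * y) = (e + k * y) * (b + n * y + m).
  by apply/eqP; rewrite -subr_eq0 -oppr_eq0 -y_root; apply/eqP; ring.
by rewrite -nullcline mulfK.
Qed.

Lemma sir_equilibrium_root :
  sir_f a b e g m n (x_of y) y = 0 /\ sir_g a b e g m n (x_of y) y = 0.
Proof.
split; rewrite /sir_f /sir_g; first by field; rewrite gy_neq0 ky_neq0.
by rewrite [in x_of y]aE; field; rewrite gy_neq0 ny_neq0 ky_neq0.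
Qed.

Lemma det_jacobian_sir_root :
  \det (jacobian2 (sir_f a b e g m n) (sir_g a b e g m n) (x_of y) y) =
  y * (2 * a1 * y + a2) / ((1 + g * y) * (b + n * y)).
Proof. by rewrite det_jacobian_sir // aE; field; rewrite gy_neq0 ny_neq0 ky_neq0. Qed.

Lemma sir_saddle_root : 2 * a1 * y + a2 < 0 ->
  saddle_point (sir_f a b e g m n) (sir_g a b e g m n) (x_of y) y.
Proof.
move=> slope_lt0; have [f_eq0 g_eq0] := sir_equilibrium_root.
split=> //; split=> //; apply: eigenvalues_of_det_lt0.
by rewrite det_jacobian_sir_root ltr_pdivrMr ?mulr_gt0 // mul0r pmulr_rlt0.
Qed.

End Root.

Hypothesis m_gt0 : 0 < m.

Local Notation Delta := (a2 ^+ 2 - 4 * a1 * a3).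
Local Notation S := (4 * m * k * (n * e - b * k)).
Local Notation a4 := ((e * n - (b - m) * k + Num.sqrt S) / n).

Lemma endemic_coef_signs : (k * b ^+ 2 + m * k * b) / (m * e) < n -> a4 < a ->
  a2 < 0 /\ 0 < Delta.
Proof.
set s := Num.sqrt S.
rewrite ltr_pdivrMr ?mulr_gt0 // => n_big; rewrite ltr_pdivrMr // => a_gt_a4.
have k_gt0 : 0 < k by rewrite addr_gt0 ?mulr_gt0.
have kb2_gt0 : 0 < k * b ^+ 2 by rewrite mulr_gt0 ?exprn_gt0.
have ne_gt : 0 < n * e - b * k by rewrite -(pmulr_rgt0 _ m_gt0); lra.
have s2E : s ^+ 2 = S by rewrite sqr_sqrtr // !mulr_ge0 ?ltW.
have s_ge0 : 0 <= s := sqrtr_ge0 _.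
have s_gt : 2 * k * b < s.
  suff : (2 * k * b) ^+ 2 < s ^+ 2 by nra.
  by rewrite s2E; nra.
(* As a polynomial in a, Delta vanishes at (e n - (b - m) k -+ s) / n, and a4
   is the larger of these roots. *)
have DeltaE : Delta = (n * a - (e * n - (b - m) * k)) ^+ 2 - s ^+ 2 by rewrite s2E; ring.
split; first lra.
by rewrite DeltaE subr_gt0; nra.
Qed.
End Endemic.

Theorem theorem2p3 (R : realType) (a b e g m n : R) :
  0 < a -> 0 < b -> 0 < g -> 0 < m -> 0 < n -> 0 < e -> e < 1 ->
  let a1 := (e * g + 1) * n in
  let a2 := (b + m) * (e * g + 1) + n * (e - a) in
  let a3 := e * (b + m) - a * b in
  let Delta := a2 ^+ 2 - 4 * a1 * a3 in
  let a4 := ((e * n - (b - m) * (e * g + 1))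
             + Num.sqrt (4 * m * (e * g + 1) * (n * e - b * (e * g + 1)))) / n in
  n > ((e * g + 1) * b ^+ 2 + m * (e * g + 1) * b) / (m * e) ->
  a4 < a -> a < e * (m + b) / b ->
  let y2 := (- a2 - Num.sqrt Delta) / (2 * a1) in
  let x2 := a * (1 + g * y2) / (e + (e * g + 1) * y2) in
  saddle_point (sir_f a b e g m n) (sir_g a b e g m n) x2 y2.
Proof.
move=> a_gt0 b_gt0 g_gt0 m_gt0 n_gt0 e_gt0 _ a1 a2 a3 Delta a4 n_big a_gt_a4 a_lt y2 x2.
have [a2_lt0 Delta_gt0] := endemic_coef_signs b_gt0 e_gt0 g_gt0 n_gt0 m_gt0 n_big a_gt_a4.
have a1_gt0 : 0 < a1 by rewrite mulr_gt0 ?addr_gt0 ?mulr_gt0.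
have a3_gt0 : 0 < a3 by move: a_lt; rewrite ltr_pdivlMr // /a3 => ?; lra.
have y2_root : a1 * y2 ^+ 2 + a2 * y2 + a3 = 0.
  by apply: quadratic_root; rewrite ?lt0r_neq0 // sqrrN sqr_sqrtr // ltW.
have y2_gt0 : 0 < y2 by apply: quadratic_smaller_root_gt0; rewrite // ltW.
apply: sir_saddle_root => //.
have -> : 2 * a1 * y2 + a2 = - Num.sqrt Delta by rewrite /y2; field; rewrite lt0r_neq0.
by rewrite oppr_lt0 sqrtr_gt0.
Qed.
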